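(* Let $n_1,\dots,n_r$ be positive integers, pairwise distinct ($n_j\ne n_l$ for $j\ne l$), and let $\mathcal R$ be a real Lie algebra of block diagonal matrices $\mathrm{diag}(A_1,\dots,A_r)$ with $A_j\in su(n_j)$ for each $j$. Assume weak subspace controllability: for every $j\in\{1,\dots,r\}$ and every $Z\in su(n_j)$ there is an element $\mathrm{diag}(A_1,\dots,A_r)\in\mathcal R$ with $A_j=Z$. Then $\mathcal R=\bigoplus_{j=1}^r su(n_j)$ (all block diagonal matrices with arbitrary blocks $A_j\in su(n_j)$). *)

From HB Require Import structures.
From mathcomp Require Import all_boot all_order all_algebra.
Set Implicit Arguments. Unset Strict Implicit. Unset Printing Implicit Defensive.
Import Order.TTheory GRing.Theory Num.Theory.
Local Open Scope ring_scope.

(* Complex scalars: any numeric closed field C (e.g. the complex numbers);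
   real scalars are the elements of Num.real. *)

Definition is_su (C : numClosedFieldType) (n : nat) (A : 'M[C]_n) : Prop :=
  (map_mx Num.conj A)^T = - A /\ \tr A = 0.

(* A block diagonal matrix diag(A_1,...,A_r), A_j of size n_j, is represented
   by its family of diagonal blocks. *)
Definition blockdiag (C : numClosedFieldType) (r : nat) (n : 'I_r -> nat) :=
  forall j : 'I_r, 'M[C]_(n j).

Definition bd_add (C : numClosedFieldType) (r : nat) (n : 'I_r -> nat) (A B : @blockdiag C r n) : blockdiag C n :=
  fun j => A j + B j.
Definition bd_scale (C : numClosedFieldType) (r : nat) (n : 'I_r -> nat) (a : C) (A : @blockdiag C r n) : blockdiag C n :=
  fun j => a *: A j.
Definition bd_zero (C : numClosedFieldType) (r : nat) (n : 'I_r -> nat) : @blockdiag C r n := fun j => 0.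
Definition bd_bracket (C : numClosedFieldType) (r : nat) (n : 'I_r -> nat) (A B : @blockdiag C r n) : blockdiag C n :=
  fun j => A j *m B j - B j *m A j.

Definition in_sum_su (C : numClosedFieldType) (r : nat) (n : 'I_r -> nat) (A : @blockdiag C r n) : Prop :=
  forall j, is_su (A j).

Definition real_lie_subalg (C : numClosedFieldType) (r : nat) (n : 'I_r -> nat) (L : @blockdiag C r n -> Prop) : Prop :=
  [/\ (forall A, L A -> in_sum_su A),
      L (bd_zero C n),
      (forall A B, L A -> L B -> L (bd_add A B)),
      (forall (a : C) A, a \is Num.real -> L A -> L (bd_scale a A)) &
      (forall A B, L A -> L B -> L (bd_bracket A B))].

Definition weak_subspace_controllable (C : numClosedFieldType) (r : nat) (n : 'I_r -> nat) (L : @blockdiag C r n -> Prop) : Prop :=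
  forall (j : 'I_r) (Z : 'M[C]_(n j)), is_su Z -> exists A, L A /\ A j = Z.

From mathcomp Require Import all_boot all_order all_algebra.
From mathcomp Require Import ring zify.
From Stdlib Require Import Classical FunctionalExtensionality.
Set Implicit Arguments. Unset Strict Implicit. Unset Printing Implicit Defensive.
Import Order.TTheory GRing.Theory Num.Theory.
Local Open Scope ring_scope.

(* Fix a block j.  The j-th blocks of the elements of L that vanish on a set
   S of other blocks form an ideal of su(n_j), by weak controllability.  Any
   nonzero ideal of su(n_j) is everything: its complexification contains an
   elementary matrix E_ab (a <> b), hence, bracketing with traceless matrices,
   all of sl(n_j) = su(n_j) + i su(n_j).
   If n_j < n_k, lift the n_k(n_k - 1) real-independent off-diagonal elements
   of su(n_k) to L; their j-blocks are more than n_j^2 skew-Hermitian matrices,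
   so some nontrivial real combination kills block j but not block k.  Hence,
   as the n_j are distinct, any two blocks can be decoupled; brackets of
   elements decoupled from one block at a time decouple block j from all the
   others (su(n_j) is not abelian when n_j > 1), and summing the isolated
   blocks gives every element of the direct sum. *)

Section SkewHermitian.
Variable C : numClosedFieldType.

Definition adjmx m n (A : 'M[C]_(m, n)) : 'M[C]_(n, m) := (map_mx Num.conj A)^T.

Lemma adjmxE m n (A : 'M[C]_(m, n)) i j : adjmx A i j = (A j i)^*.
Proof. by rewrite !mxE. Qed.

Lemma adjmx0 m n : adjmx (0 : 'M[C]_(m, n)) = 0.
Proof. by rewrite /adjmx map_mx0 trmx0. Qed.

Lemma adjmxD m n (A B : 'M[C]_(m, n)) : adjmx (A + B) = adjmx A + adjmx B.
Proof. by rewrite /adjmx map_mxD linearD. Qed.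

Lemma adjmxN m n (A : 'M[C]_(m, n)) : adjmx (- A) = - adjmx A.
Proof. by rewrite /adjmx map_mxN linearN. Qed.

Lemma adjmxZ m n a (A : 'M[C]_(m, n)) : adjmx (a *: A) = a^* *: adjmx A.
Proof. by rewrite /adjmx map_mxZ linearZ. Qed.

Lemma adjmx_delta m n (i : 'I_m) (j : 'I_n) : adjmx (delta_mx i j) = delta_mx j i.
Proof. by apply/matrixP => x y; rewrite adjmxE !mxE conjC_nat andbC. Qed.

Lemma mxtrace_adjmx m (A : 'M[C]_m) : \tr (adjmx A) = (\tr A)^*.
Proof. by rewrite /adjmx mxtrace_tr trace_map_mx. Qed.

Lemma traceless_su_rect m (W : 'M[C]_m) :
  \tr W = 0 -> exists S1 S2, [/\ is_su S1, is_su S2 & W = S1 + 'i *: S2].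
Proof.
move=> trW; have tr_adjW : \tr (adjmx W) = 0 by rewrite mxtrace_adjmx trW conjC0.
exists (2^-1 *: (W - adjmx W)), (- 'i / 2 *: (W + adjmx W)); split.
- split; last by rewrite mxtraceZ linearB /= trW tr_adjW subrr mulr0.
  apply/matrixP => i j; rewrite -/(adjmx _) !(adjmxE, mxE) rmorphM rmorphB /=.
  by rewrite conjCK fmorphV rmorph_nat; ring.
- split; last by rewrite mxtraceZ mxtraceD trW tr_adjW addr0 mulr0.
  apply/matrixP => i j; rewrite -/(adjmx _) !(adjmxE, mxE) !(rmorphM, rmorphD, rmorphN) /=.
  by rewrite conjCK fmorphV rmorph_nat conjCi; ring.
- by apply/matrixP => i j; rewrite !mxE; have := mulCii C => ii; field: ii.
Qed.

Lemma su_rectE m (Z A B : 'M[C]_m) :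
  is_su Z -> is_su A -> is_su B -> Z = A + 'i *: B -> Z = A.
Proof.
move=> [adjZ _] [adjA _] [adjB _] eZ.
have herm : adjmx ('i *: B) = 'i *: B.
  by rewrite adjmxZ conjCi /adjmx adjB scalerN scaleNr opprK.
have eB : 'i *: B = Z - A by rewrite eZ addrC addKr.
have skew : adjmx ('i *: B) = - ('i *: B).
  by rewrite eB adjmxD adjmxN /adjmx adjZ adjA opprK opprB addrC.
suff iB0 : 'i *: B = 0 by rewrite eZ iB0 addr0.
apply/matrixP => i j; move/matrixP/(_ i j): skew; rewrite herm !mxE => e.
have : 'i * B i j *+ 2 == 0 by rewrite mulr2n {2}e subrr.
by rewrite mulrn_eq0 => /eqP.
Qed.

End SkewHermitian.

Section LieBracket.
Variable R : comPzRingType.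

Definition lie m (X Y : 'M[R]_m) := X *m Y - Y *m X.

Lemma lieDl m (X Y Z : 'M[R]_m) : lie (X + Y) Z = lie X Z + lie Y Z.
Proof. by rewrite /lie mulmxDl mulmxDr opprD addrACA. Qed.

Lemma lieDr m (X Y Z : 'M[R]_m) : lie X (Y + Z) = lie X Y + lie X Z.
Proof. by rewrite /lie mulmxDl mulmxDr opprD addrACA. Qed.

Lemma lieZl m a (X Y : 'M[R]_m) : lie (a *: X) Y = a *: lie X Y.
Proof. by rewrite /lie -scalemxAl -scalemxAr scalerBr. Qed.

Lemma lieZr m a (X Y : 'M[R]_m) : lie X (a *: Y) = a *: lie X Y.
Proof. by rewrite /lie -scalemxAl -scalemxAr scalerBr. Qed.

Lemma lieC m (X Y : 'M[R]_m) : lie X Y = - lie Y X.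
Proof. by rewrite /lie opprB. Qed.

Lemma lie_delta m (a b c d : 'I_m) :
  lie (delta_mx a b) (delta_mx c d) = delta_mx a d *+ (b == c) - delta_mx c b *+ (d == a).
Proof. by rewrite /lie !mul_delta_mx_cond. Qed.

Lemma delta_mulmxE m n p (a : 'I_m) (b : 'I_n) (X : 'M[R]_(n, p)) i j :
  (delta_mx a b *m X) i j = (i == a)%:R * X b j.
Proof.
rewrite mxE (bigD1 b) //= big1 ?addr0; first by rewrite mxE eqxx andbT.
by move=> k kb; rewrite mxE (negbTE kb) andbF mul0r.
Qed.

Lemma mulmx_deltaE m n p (a : 'I_n) (b : 'I_p) (X : 'M[R]_(m, n)) i j :
  (X *m delta_mx a b) i j = X i a * (j == b)%:R.
Proof.
rewrite mxE (bigD1 a) //= big1 ?addr0; first by rewrite mxE eqxx.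
by move=> k ka; rewrite mxE (negbTE ka) mulr0.
Qed.

Lemma delta_mulmx_delta m (p q x y : 'I_m) (X : 'M[R]_m) :
  delta_mx p q *m X *m delta_mx x y = X q x *: delta_mx p y.
Proof.
apply/matrixP => i j; rewrite mulmx_deltaE delta_mulmxE !mxE.
by case: (i == p); case: (j == y); rewrite /= ?mulr0 ?mul0r ?mulr1 ?mul1r.
Qed.

Lemma lie_delta_lie_delta m (p q : 'I_m) (X : 'M[R]_m) : p != q ->
  lie (delta_mx p q) (lie (delta_mx p q) X) = (- 2 * X q p) *: delta_mx p q.
Proof.
rewrite eq_sym => /negbTE qp.
have EE0 : delta_mx p q *m delta_mx p q = 0 :> 'M[R]_m.
  by rewrite mul_delta_mx_cond qp mulr0n.
rewrite /lie !mulmxBr !mulmxBl !mulmxA EE0 mul0mx -!mulmxA EE0 mulmx0 !mulmxA.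
rewrite delta_mulmx_delta; apply/matrixP => i j; rewrite !mxE; ring.
Qed.

Lemma lie_delta_entry m (a b : 'I_m) (X : 'M[R]_m) :
  lie (delta_mx a b) X a b = X b b - X a a.
Proof. by rewrite /lie mxE [X in _ + X]mxE delta_mulmxE mulmx_deltaE !eqxx mul1r mulr1. Qed.

Lemma mxtrace_delta_neq m (a b : 'I_m) : a != b -> \tr (delta_mx a b : 'M[R]_m) = 0.
Proof.
move=> ab; rewrite /mxtrace big1 // => k _; rewrite mxE.
by case: eqP => // ->; rewrite (negbTE ab).
Qed.

Lemma traceless_mx_delta_sum m (a : 'I_m) (M : 'M[R]_m) : \tr M = 0 ->
  M = \sum_i \sum_j M i j *: (delta_mx i j - (i == j)%:R *: delta_mx a a).
Proof.
move=> trM; under eq_bigr do under eq_bigr do rewrite scalerBr scalerA.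
rewrite (eq_bigr (fun i => \sum_j M i j *: delta_mx i j - M i i *: delta_mx a a)).
  by rewrite sumrB -scaler_suml -/(mxtrace M) trM scale0r subr0 -matrix_sum_delta.
move=> i _; rewrite sumrB; congr (_ - _).
rewrite (bigD1 i) //= eqxx mulr1 big1 ?addr0 // => j ji.
by rewrite eq_sym (negbTE ji) mulr0 scale0r.
Qed.

End LieBracket.

Lemma traceless_mx_neq0 (F : numDomainType) m (X : 'M[F]_m) : \tr X = 0 -> X != 0 ->
  exists p q, p != q /\ (X q p != 0 \/ X p p != X q q).
Proof.
move=> trX nzX.
have [/existsP[p /existsP[q /andP[pq /orP H]]]|] :=
  boolP [exists p, exists q, (p != q) && ((X q p != 0) || (X p p != X q q))].
  by exists p, q.
rewrite negb_exists => /forallP noP; case/eqP: nzX.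
have diagX p q : p != q -> X q p = 0 /\ X p p = X q q.
  move=> pq; move: (noP p); rewrite negb_exists => /forallP/(_ q).
  by rewrite pq negb_or !negbK => /andP[/eqP -> /eqP ->].
case: m X trX diagX {noP} => [|m] X trX diagX; first by apply/matrixP => [[]].
have scalarX : X = (X 0 0)%:M.
  apply/matrixP => i j; rewrite !mxE; have [<-|ij] := eqVneq i j.
    by have [-> //|i0] := eqVneq i 0; rewrite mulr1n (diagX _ _ i0).2.
  by rewrite mulr0n (diagX j i _).1 // eq_sym.
move: trX; rewrite scalarX mxtrace_scalar => /eqP; rewrite mulrn_eq0 /= => /eqP X00.
by rewrite scalarX X00; apply/matrixP => i j; rewrite !mxE mul0rn.
Qed.

Definition su_ideal (C : numClosedFieldType) m (I : 'M[C]_m -> Prop) :=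
  [/\ forall X, I X -> is_su X, I 0,
     (forall a X Y, a \is Num.real -> I X -> I Y -> I (a *: X + Y)) &
     forall X W, I X -> is_su W -> I (lie X W)].

Definition complexification (C : numClosedFieldType) m (I : 'M[C]_m -> Prop) N :=
  exists A B, [/\ I A, I B & N = A + 'i *: B].

Section SuIdeal.
Variables (C : numClosedFieldType) (m : nat) (I : 'M[C]_m -> Prop).
Hypothesis idealI : su_ideal I.
Local Notation IC := (complexification I).

Lemma su_ideal_su X : I X -> is_su X.
Proof. by case: idealI => suI *; apply: suI. Qed.

Lemma su_ideal_opp X : I X -> I (- X).
Proof.
case: idealI => _ I0 IZD _ IX.
by rewrite -scaleN1r -[_ *: X]addr0; apply: IZD; rewrite ?rpredN1.
Qed.

Lemma complexification_of X : I X -> IC X.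
Proof. by case: idealI => _ I0 _ _ IX; exists X, 0; rewrite scaler0 addr0. Qed.

Lemma complexification0 : IC 0.
Proof. by apply: complexification_of; case: idealI. Qed.

Lemma complexificationZD c N1 N2 : IC N1 -> IC N2 -> IC (c *: N1 + N2).
Proof.
case: idealI => _ _ IZD _ [A1 [B1 [IA1 IB1 ->]]] [A2 [B2 [IA2 IB2 ->]]].
have realNIm : - 'Im c \is Num.real by rewrite rpredN Creal_Im.
exists ('Re c *: A1 + ((- 'Im c) *: B1 + A2)), ('Im c *: A1 + ('Re c *: B1 + B2)).
split; try by apply: IZD (IZD _ _ _ _ _ _) => //; rewrite ?Creal_Re ?Creal_Im.
apply/matrixP => i j; rewrite !mxE {1}(Crect c); have := mulCii C => ii; ring: ii.
Qed.

Lemma complexificationD N1 N2 : IC N1 -> IC N2 -> IC (N1 + N2).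
Proof. by move=> IC1 IC2; have := complexificationZD 1 IC1 IC2; rewrite scale1r. Qed.

Lemma complexificationZ c N : IC N -> IC (c *: N).
Proof. by move=> ICN; have := complexificationZD c ICN complexification0; rewrite addr0. Qed.

Lemma complexification_lie W N : \tr W = 0 -> IC N -> IC (lie W N).
Proof.
move=> trW ICN; have [S1 [S2 [suS1 suS2 ->]]] := traceless_su_rect trW.
have lie_su S : is_su S -> IC (lie S N).
  case: ICN idealI => A [B [IA IB ->]] [_ _ _ Ilie] suS.
  exists (- lie A S), (- lie B S); split; try by apply: su_ideal_opp; apply: Ilie.
  by rewrite lieDr lieZr (lieC S A) (lieC S B) scalerN.
by rewrite lieDl lieZl; apply: complexificationD; [|apply: complexificationZ]; apply: lie_su.
Qed.

Lemma complexification_delta_of_entry N p q :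
  IC N -> p != q -> N q p != 0 -> IC (delta_mx p q).
Proof.
move=> ICN pq Nqp; have trE := mxtrace_delta_neq C pq.
have := complexificationZ (- 2 * N q p)^-1
  (complexification_lie trE (complexification_lie trE ICN)).
rewrite lie_delta_lie_delta // scalerA mulVf ?scale1r //.
by rewrite mulf_neq0 // oppr_eq0 pnatr_eq0.
Qed.

Lemma complexification_delta_row a b x :
  IC (delta_mx a b) -> x != b -> IC (delta_mx x b).
Proof.
move=> ICab xb; have [-> //|xa] := eqVneq x a.
have := complexification_lie (mxtrace_delta_neq C xa) ICab.
by rewrite lie_delta eqxx [b == x]eq_sym (negbTE xb) mulr0n subr0.
Qed.

Lemma complexification_delta_col a b y :
  IC (delta_mx a b) -> y != a -> IC (delta_mx a y).
Proof.
move=> ICab ya; have [-> //|yb] := eqVneq y b.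
have by_ : b != y by rewrite eq_sym.
have := complexificationZ (-1) (complexification_lie (mxtrace_delta_neq C by_) ICab).
by rewrite lie_delta eqxx (negbTE ya) mulr0n sub0r scaleN1r opprK.
Qed.

Lemma complexification_delta a b x y :
  a != b -> IC (delta_mx a b) -> x != y -> IC (delta_mx x y).
Proof.
move=> ab ICab; rewrite eq_sym => yx; have [xb|xb] := eqVneq x b; last first.
  exact: complexification_delta_col (complexification_delta_row ICab xb) yx.
subst x; have ICba : IC (delta_mx b a).
  apply: complexification_delta_of_entry ICab _ _; first by rewrite eq_sym.
  by rewrite mxE !eqxx oner_neq0.
exact: complexification_delta_col ICba yx.
Qed.

Lemma complexification_traceless a b M :
  a != b -> IC (delta_mx a b) -> \tr M = 0 -> IC M.
Proof.
move=> ab ICab /(traceless_mx_delta_sum a) ->.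
apply: (big_ind IC complexification0 complexificationD) => i _.
apply: (big_ind IC complexification0 complexificationD) => j _.
apply: complexificationZ; have [<-|ij] := eqVneq i j; last first.
  by rewrite scale0r subr0; apply: complexification_delta ICab ij.
rewrite scale1r; have [->|ia] := eqVneq i a; first by rewrite subrr; apply: complexification0.
have ai : a != i by rewrite eq_sym.
have := complexification_lie (mxtrace_delta_neq C ia) (complexification_delta ab ICab ai).
by rewrite lie_delta !eqxx !mulr1n.
Qed.

Lemma complexification_delta_exists X :
  I X -> X != 0 -> exists a b, a != b /\ IC (delta_mx a b).
Proof.
move=> IX nzX; have [suX ICX] := (su_ideal_su IX, complexification_of IX).
have [p [q [pq [Xqp|Xpq]]]] := traceless_mx_neq0 suX.2 nzX.
  by exists p, q; split => //; apply: complexification_delta_of_entry ICX pq Xqp.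
exists q, p; split; first by rewrite eq_sym.
apply: complexification_delta_of_entry (complexification_lie (mxtrace_delta_neq C pq) ICX) _ _.
  by rewrite eq_sym.
by rewrite lie_delta_entry subr_eq0 eq_sym.
Qed.

Lemma su_ideal_full X Z : I X -> X != 0 -> is_su Z -> I Z.
Proof.
move=> IX nzX suZ; have [a [b [ab ICab]]] := complexification_delta_exists IX nzX.
have [A [B [IA IB eZ]]] := complexification_traceless ab ICab suZ.2.
by rewrite (su_rectE suZ (su_ideal_su IA) (su_ideal_su IB) eZ).
Qed.

End SuIdeal.

Lemma matrix_family_dep (F : fieldType) (T : finType) N (Y : T -> 'M[F]_N) :
  (N * N < #|T|)%N -> exists u : T -> F, (exists t, u t != 0) /\ \sum_t u t *: Y t = 0.
Proof.
move=> ltNT; pose X := [tuple Y (enum_val i) | i < #|T|].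
have /freeP depX : ~~ free X.
  rewrite /free size_tuple; apply: contraTneq ltNT => <-.
  by rewrite -leqNgt (leq_trans (dimvS (subvf _))) // dimvf dim_matrix.
have [k [sumk0 [i ki]]] :
    exists k, \sum_(i < #|T|) k i *: X`_i = 0 /\ exists i, k i != 0.
  apply: NNPP => noK; apply: depX => k sumk0 i; apply: NNPP => ki.
  by apply: noK; exists k; split => //; exists i; apply/eqP.
exists (fun t => k (enum_rank t)); split; first by exists (enum_val i); rewrite enum_valK.
rewrite -[RHS]sumk0 (reindex enum_rank) /=; last first.
  by exists enum_val => t _; rewrite ?enum_rankK ?enum_valK.
by apply: eq_bigr => t _; rewrite nth_mktuple enum_rankK.
Qed.

Lemma skew_family_real_dep (C : numClosedFieldType) (T : finType) N (Y : T -> 'M[C]_N) :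
  (forall t, adjmx (Y t) = - Y t) -> (N * N < #|T|)%N ->
  exists c : T -> C,
    [/\ forall t, c t \is Num.real, exists t, c t != 0 & \sum_t c t *: Y t = 0].
Proof.
move=> skewY /(matrix_family_dep Y)[u [[t0 ut0] sumu0]].
have sumu0_conj : \sum_t (u t)^* *: Y t = 0.
  have := congr1 (@adjmx C N N) sumu0.
  rewrite adjmx0 (big_morph _ (@adjmxD C N N) (adjmx0 C N N)) => /(congr1 -%R).
  rewrite oppr0 -sumrN => e; rewrite -[RHS]e; apply: eq_bigr => t _.
  by rewrite adjmxZ skewY scalerN opprK.
have sumRe0 : \sum_t 'Re (u t) *: Y t = 0.
  rewrite (eq_bigr (fun t => 2^-1 *: (u t *: Y t + (u t)^* *: Y t))).
    by rewrite -scaler_sumr big_split /= sumu0 sumu0_conj addr0 scaler0.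
  by move=> t _; rewrite ReE scalerDr !scalerA -scalerDl mulrC mulrDr.
have sumIm0 : \sum_t 'Im (u t) *: Y t = 0.
  rewrite (eq_bigr (fun t => ('i / 2) *: ((u t)^* *: Y t - u t *: Y t))).
    by rewrite -scaler_sumr sumrB sumu0 sumu0_conj subr0 scaler0.
  by move=> t _; rewrite ImE -scalerBl scalerA mulrAC.
have [/existsP[t Re_t]|] := boolP [exists t, 'Re (u t) != 0].
  exists (fun t => 'Re (u t)).
  by split; [move=> ?; apply: Creal_Re | exists t | exact: sumRe0].
rewrite negb_exists => /forallP Re0.
exists (fun t => 'Im (u t)); split; [move=> ?; apply: Creal_Im | exists t0 | exact: sumIm0].
apply: contra ut0 => /eqP Im_t0.
by move: (Re0 t0); rewrite negbK => /eqP Re_t0; rewrite [u t0]Crect Re_t0 Im_t0 mulr0 addr0.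
Qed.

Notation offdiag m := {p : 'I_m * 'I_m | p.1 != p.2}.

Section SkewOffdiag.
Variable C : numClosedFieldType.

Definition skewmx m (N : 'M[C]_m) : 'M[C]_m := \matrix_(x, y)
  ((x < y)%N%:R * (N x y + 'i * N y x) + (y < x)%N%:R * (- N y x + 'i * N x y)).

Lemma skewmxZD m a (N1 N2 : 'M[C]_m) :
  skewmx (a *: N1 + N2) = a *: skewmx N1 + skewmx N2.
Proof. by apply/matrixP => x y; rewrite !mxE; ring. Qed.

Lemma skewmx0 m : skewmx (0 : 'M[C]_m) = 0.
Proof. by apply/matrixP => x y; rewrite !mxE; ring. Qed.

Lemma skewmx_sum (T : finType) m (c : T -> C) (N : T -> 'M[C]_m) :
  skewmx (\sum_t c t *: N t) = \sum_t c t *: skewmx (N t).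
Proof.
apply: (big_ind2 (fun A B => skewmx A = B)) => [|A1 B1 A2 B2 <- <-|t _].
- exact: skewmx0.
- by rewrite -[A1]scale1r skewmxZD !scale1r.
- by rewrite -[c t *: N t]addr0 skewmxZD skewmx0 addr0.
Qed.

Lemma skewmx_su m (N : 'M[C]_m) : (forall x y, N x y \is Num.real) -> is_su (skewmx N).
Proof.
move=> realN; split.
  apply/matrixP => x y; rewrite -/(adjmx _) adjmxE !mxE.
  by rewrite !(rmorphD, rmorphM, rmorphN) /= !conjC_nat conjCi !conj_Creal //; ring.
by rewrite /mxtrace big1 // => i _; rewrite mxE ltnn !mul0r addr0.
Qed.

Lemma skewmx_eq0 m (N : 'M[C]_m) : (forall x y, N x y \is Num.real) ->
  skewmx N = 0 -> forall x y, x != y -> N x y = 0.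
Proof.
move=> realN N0.
have entry0 (x y : 'I_m) : (x < y)%N -> N x y = 0 /\ N y x = 0.
  move=> xy; move/matrixP/(_ x y): N0; rewrite !mxE xy ltnNge (ltnW xy) /=.
  rewrite mul1r mul0r addr0 => /(congr1 (fun z => ('Re z, 'Im z))) [].
  by rewrite !(Re_rect, Im_rect) // !raddf0 => -> ->.
move=> x y; rewrite neq_ltn => /orP[] lt.
  exact: (entry0 _ _ lt).1.
exact: (entry0 _ _ lt).2.
Qed.

Lemma card_offdiag m : #|{: offdiag m}| = (m * m - m)%N.
Proof.
have card_diag : #|[pred p : 'I_m * 'I_m | p.1 == p.2]| = m.
  rewrite -[RHS]card_ord -(@card_codom _ _ (fun i : 'I_m => (i, i))); last by move=> i j [].
  apply: eq_card => -[i j]; rewrite inE /=.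
  by apply/eqP/codomP => [->|[k [-> ->]]]; [exists j|].
have := cardC [pred p : 'I_m * 'I_m | p.1 == p.2].
rewrite card_diag card_prod card_ord => <-; rewrite addKn card_sig.
by apply: eq_card => p; rewrite !inE.
Qed.

Definition su_offdiag m (p : offdiag m) : 'M[C]_m := skewmx (delta_mx (val p).1 (val p).2).

Lemma su_offdiag_su m (p : offdiag m) : is_su (su_offdiag p).
Proof. by apply: skewmx_su => x y; rewrite mxE realn. Qed.

Lemma su_offdiag_free m (c : offdiag m -> C) : (forall p, c p \is Num.real) ->
  \sum_p c p *: su_offdiag p = 0 -> forall p, c p = 0.
Proof.
move=> realc sum0 p.
pose N := \sum_p c p *: (delta_mx (val p).1 (val p).2 : 'M[C]_m).
have realN x y : N x y \is Num.real.
  by rewrite summxE; apply: rpred_sum => q _; rewrite !mxE rpredM ?realn.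
have := skewmx_eq0 realN _ (valP p); rewrite skewmx_sum sum0 => /(_ erefl).
rewrite summxE (bigD1 p) //= big1 ?addr0; first by rewrite !mxE !eqxx mulr1.
move=> q qp; rewrite !mxE; case: eqP => [e1|]; case: eqP => [e2|] //=; rewrite ?mulr0 //.
by case/eqP: qp; apply: val_inj; rewrite [val q]surjective_pairing -e1 -e2 -surjective_pairing.
Qed.

End SkewOffdiag.
Arguments su_offdiag {C m} p.

Lemma su_lie_neq0 (C : numClosedFieldType) m (a b : 'I_m) : a != b ->
  exists X Y : 'M[C]_m, [/\ is_su X, is_su Y & lie X Y != 0].
Proof.
move=> ab; have ba : b != a by rewrite eq_sym.
exists (delta_mx a b - delta_mx b a), ('i *: (delta_mx a b + delta_mx b a)); split.
- split; first by rewrite -/(adjmx _) adjmxD adjmxN !adjmx_delta opprB addrC.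
  by rewrite linearB /= !mxtrace_delta_neq // subrr.
- split; first by rewrite -/(adjmx _) adjmxZ adjmxD !adjmx_delta conjCi scaleNr addrC.
  by rewrite mxtraceZ mxtraceD !mxtrace_delta_neq // addr0 mulr0.
- rewrite /lie -scalemxAl -scalemxAr !(mulmxBl, mulmxDl, mulmxDr, mulmxBr, mulmxN, mulNmx).
  rewrite !mul_delta_mx_cond !eqxx (negbTE ab) ?(negbTE ba) !mulr1n !mulr0n.
  apply/eqP => /matrixP/(_ a a); rewrite !mxE !eqxx (negbTE ab) ?(negbTE ba) /=.
  have -> : 'i * (0 + 1 - (0 + 0)) - 'i * (0 - 1 + (0 - 0)) = 'i *+ 2 :> C by ring.
  by move/eqP; rewrite mulrn_eq0 (negbTE (neq0Ci C)).
Qed.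

Lemma su_le1_eq0 (C : numClosedFieldType) m (Z : 'M[C]_m) : (m <= 1)%N -> is_su Z -> Z = 0.
Proof.
move=> le_m1 [_ trZ]; apply/matrixP => x y.
have ord_eq (i j : 'I_m) : i = j by apply: ord_inj; have := ltn_ord i; have := ltn_ord j; lia.
by rewrite -(ord_eq x y) mxE -trZ /mxtrace (big_pred1 x) // => i; apply/esym/eqP/ord_eq.
Qed.

Section BlockIdeals.
Variables (C : numClosedFieldType) (r : nat) (n : 'I_r -> nat) (L : blockdiag C n -> Prop).
Hypotheses (subalgL : real_lie_subalg L) (ctrlL : weak_subspace_controllable L).

Lemma subalg_su A : L A -> in_sum_su A.
Proof. by case: subalgL => suL *; apply: suL. Qed.

Lemma subalg_sub A B : L A -> L B -> L (bd_add A (bd_scale (-1) B)).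
Proof.
case: subalgL => _ _ Ladd Lscale _ LA LB.
by apply: Ladd (Lscale _ _ _ _) => //; rewrite rpredN1.
Qed.

Lemma subalg_sum (I : finType) (F : I -> blockdiag C n) :
  (forall i, L (F i)) -> L (\big[@bd_add C r n/bd_zero C n]_i F i).
Proof. by case: subalgL => _ L0 Ladd _ _ LF; apply: big_ind. Qed.

Lemma bd_sumE (I : finType) (F : I -> blockdiag C n) j :
  (\big[@bd_add C r n/bd_zero C n]_i F i) j = \sum_i F i j.
Proof. by apply: (big_rec2 (fun (A : blockdiag C n) M => A j = M)) => // i A M _ <-. Qed.

Definition block_ideal j (S : 'I_r -> Prop) (Z : 'M[C]_(n j)) :=
  exists A, [/\ L A, A j = Z & forall k, S k -> A k = 0].
Arguments block_ideal : clear implicits.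

Lemma block_ideal_su_ideal j S : su_ideal (block_ideal j S).
Proof.
case: subalgL => suL L0 Ladd Lscale Llie; split.
- by move=> X [A [LA <- _]]; apply: suL.
- by exists (bd_zero C n).
- move=> a X Y a_real [A [LA <- A0]] [B [LB <- B0]].
  exists (bd_add (bd_scale a A) B); split; [by apply: Ladd => //; apply: Lscale | by [] |].
  by move=> k Sk; rewrite /bd_add /bd_scale A0 // B0 // scaler0 addr0.
- move=> X W [A [LA <- A0]] suW; have [B [LB <- ]] := ctrlL suW.
  exists (bd_bracket A B); split; [exact: Llie | by [] |].
  by move=> k Sk; rewrite /bd_bracket A0 // mul0mx mulmx0 subrr.
Qed.

Lemma block_ideal_full j S Z Z' :
  block_ideal j S Z -> Z != 0 -> is_su Z' -> block_ideal j S Z'.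
Proof. exact: (su_ideal_full (block_ideal_su_ideal j S)). Qed.

Lemma block_ideal_neq0 j k : (0 < n j)%N -> (n j < n k)%N ->
  exists2 Z, block_ideal k (fun x => x = j) Z & Z != 0.
Proof.
move=> nj_gt0 njk.
have [B LB] : exists B : offdiag (n k) -> blockdiag C n,
    forall p, L (B p) /\ B p k = su_offdiag p.
  apply: (@fin_all_exists _ (fun _ => blockdiag C n) (fun p B => L B /\ B k = su_offdiag p)).
  by move=> p; apply: ctrlL; apply: su_offdiag_su.
have card_gt : (n j * n j < #|{: offdiag (n k)}|)%N by rewrite card_offdiag; nia.
have skewB p : adjmx (B p j) = - B p j by case: (subalg_su (LB p).1 j).
have [c [c_real [p cp] sum0]] := skew_family_real_dep skewB card_gt.
pose D := \big[@bd_add C r n/bd_zero C n]_p bd_scale (c p) (B p).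
have LD : L D.
  by apply: subalg_sum => q; case: subalgL => _ _ _ Lscale _; apply: Lscale (LB q).1.
have Dk : D k = \sum_q c q *: su_offdiag q.
  by rewrite /D bd_sumE; apply: eq_bigr => q _; rewrite /bd_scale (LB q).2.
exists (D k); first by exists D; split => // x ->; rewrite /D bd_sumE.
by rewrite Dk; apply: contra cp => /eqP/(su_offdiag_free c_real) ->.
Qed.

Hypotheses (n_gt0 : forall j, (0 < n j)%N) (n_inj : injective n).

Lemma block_ideal_pair j k Z :
  j != k -> is_su Z -> block_ideal j (fun x => x = k) Z.
Proof.
move=> jk suZ; have : n j != n k by apply: contra jk => /eqP/n_inj ->.
case: ltngtP => // [lt_jk|lt_kj] _; last first.
  by have [W IW nzW] := block_ideal_neq0 (n_gt0 k) lt_kj; apply: block_ideal_full IW nzW suZ.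
have [W IW nzW] := block_ideal_neq0 (n_gt0 j) lt_jk.
have [A [LA Aj]] := ctrlL suZ.
have [B [LB Bk B0]] := block_ideal_full IW nzW (subalg_su LA k).
exists (bd_add A (bd_scale (-1) B)); split; first exact: subalg_sub.
  by rewrite /bd_add /bd_scale Aj B0 // scaler0 addr0.
by move=> x ->; rewrite /bd_add /bd_scale Bk scaleN1r subrr.
Qed.

Lemma block_ideal_seq j (s : seq 'I_r) Z :
  j \notin s -> is_su Z -> block_ideal j (fun x => x \in s) Z.
Proof.
elim: s Z => [|k s IHs] Z js suZ.
  by have [A [LA Aj]] := ctrlL suZ; exists A; split => // x; rewrite in_nil.
move: js; rewrite inE negb_or => /andP[jk js].
have [le_nj1|lt1_nj] := leqP (n j) 1.
  by rewrite (su_le1_eq0 le_nj1 suZ); case: (block_ideal_su_ideal j (fun x => x \in k :: s)).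
have [X [Y [suX suY XY]]] := su_lie_neq0 C (isT : Ordinal (ltnW lt1_nj) != Ordinal lt1_nj).
have [A [LA AX As]] := IHs X js suX.
have [B [LB BY Bk]] := block_ideal_pair jk suY.
apply: block_ideal_full _ XY suZ; exists (bd_bracket A B); split.
- by case: subalgL => _ _ _ _ Llie; apply: Llie.
- by rewrite /bd_bracket AX BY.
- move=> x; rewrite inE /bd_bracket => /orP[/eqP ->|xs].
    by rewrite Bk // mulmx0 mul0mx subrr.
  by rewrite As // mul0mx mulmx0 subrr.
Qed.

Lemma block_ideal_compl j Z : is_su Z -> block_ideal j (fun k => k != j) Z.
Proof.
move=> suZ; have js : j \notin [seq k <- enum 'I_r | k != j] by rewrite mem_filter eqxx.
have [A [LA Aj A0]] := block_ideal_seq js suZ.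
by exists A; split => // k kj; apply: A0; rewrite mem_filter kj mem_enum.
Qed.

End BlockIdeals.

Theorem lemma4p3 (C : numClosedFieldType) (r : nat) (n : 'I_r -> nat)
  (npos : forall j, (0 < n j)%N) (ndist : injective n)
  (L : blockdiag C n -> Prop)
  (HL : real_lie_subalg L) (Hctrl : weak_subspace_controllable L) :
  forall A : blockdiag C n, L A <-> in_sum_su A.
Proof.
move=> A; split; first exact: subalg_su.
move=> suA; have [E LE] : exists E : 'I_r -> blockdiag C n,
    forall j, [/\ L (E j), E j j = A j & forall k, k != j -> E j k = 0].
  apply: (@fin_all_exists _ (fun _ => blockdiag C n)
    (fun j B => [/\ L B, B j = A j & forall k, k != j -> B k = 0])) => j.
  by have [B [LB Bj B0]] := block_ideal_compl HL Hctrl npos ndist (suA j); exists B.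
suff -> : A = \big[@bd_add C r n/bd_zero C n]_j E j.
  by apply: subalg_sum => // j; case: (LE j).
apply: functional_extensionality_dep => x; rewrite bd_sumE (bigD1 x) //= big1 ?addr0.
  by case: (LE x).
by move=> j jx; case: (LE j) => _ _; apply; rewrite eq_sym.
Qed.
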